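(* Let $\mathbb{F}$ be a field, $p,q\in\mathbb{F}[t]$ monic of degree $2$, and $\mathcal{W}_{p,q}=\mathbb{F}\langle a,b\rangle/(p(a),q(b))$. An element $x\in\mathcal{W}_{p,q}$ is invertible if and only if $N(x)\in\mathbb{F}^\times$, where $N(x)=xx^\star$.
   Context: $\mathcal{W}_{p,q}$ is the free associative unital $\mathbb{F}$-algebra on two generators modulo the ideal generated by $p(a),q(b)$. For a $2$-dimensional algebra set $x^\star=\mathrm{tr}(x)-x$; the adjunction $x\mapsto x^\star$ of $\mathcal{W}_{p,q}$ is the unique $\mathbb{F}$-linear anti-automorphism agreeing with this on $\mathbb{F}[a]$ and $\mathbb{F}[b]$ (so $a^\star=\mathrm{tr}(p)-a$, $b^\star=\mathrm{tr}(q)-b$). The norm $N(x)=xx^\star=x^\star x$ lies in the center $\mathbb{F}[\omega]$, $\omega=ab^\star+ba^\star$, and is multiplicative. *)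

From HB Require Import structures.
From mathcomp Require Import all_boot all_order all_algebra.
Set Implicit Arguments. Unset Strict Implicit. Unset Printing Implicit Defensive.
Import GRing.Theory.
Local Open Scope ring_scope.

Definition peval (F : fieldType) (A : algType F) (p : {poly F}) (x : A) : A :=
  (map_poly (in_alg A) p).[x].

Definition is_alg_morph (F : fieldType) (A B : algType F) (f : A -> B) : Prop :=
  [/\ forall (k : F) (x y : A), f (k *: x + y) = k *: f x + f y,
      f 1 = 1 &
      forall x y : A, f (x * y) = f x * f y].

(* (A, a, b) is the algebra W_{p,q} = F<a,b>/(p(a), q(b)), characterised by
   its universal property as the presented F-algebra. *)
Definition is_W (F : fieldType) (p q : {poly F}) (A : algType F) (a b : A) : Prop :=
  [/\ peval p a = 0, peval q b = 0,
      (forall (B : algType F) (a' b' : B), peval p a' = 0 -> peval q b' = 0 ->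
         exists f : A -> B, is_alg_morph f /\ f a = a' /\ f b = b') &
      (forall (B : algType F) (f g : A -> B), is_alg_morph f -> is_alg_morph g ->
         f a = g a -> f b = g b -> forall x, f x = g x)].

(* Trace of the generator of F[t]/(p) for monic p of degree 2:
   p = t^2 - tr(p) t + n(p). *)
Definition trp (F : fieldType) (p : {poly F}) : F := - p`_1.

Definition is_adjunction (F : fieldType) (p q : {poly F}) (A : algType F) (a b : A)
  (star : A -> A) : Prop :=
  [/\ forall (k : F) (x y : A), star (k *: x + y) = k *: star x + star y,
      forall x y : A, star (x * y) = star y * star x,
      star 1 = 1,
      star a = (trp p)%:A - a &
      star b = (trp q)%:A - b].

From HB Require Import structures.
From mathcomp Require Import all_boot all_order all_algebra.
From mathcomp Require Import ring boolp.
Set Implicit Arguments.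
Unset Strict Implicit.
Unset Printing Implicit Defensive.
Import GRing.Theory.
Local Open Scope ring_scope.

(* The element omega = a b^* + b a^* commutes with a and b, because each of them
   satisfies a quadratic relation, so F[omega] is central and star-fixed, and A is
   spanned over F[omega] by 1, a, b, ab.  Hence the trace x + x^* lies in F[omega],
   and then so does the norm N x = x x^*, which is multiplicative.  A representation
   by 2x2 matrices over F[t] shows that omega is transcendental, so F[omega] is a
   polynomial ring: if x y = 1 then N x * N y = 1 there, and N x is a nonzero
   constant.  Conversely x^-1 = (N x)^-1 x^* since x x^* = x^* x. *)

Section AlgMorphism.
Variables (F : fieldType) (A B C : algType F).

Lemma alg_morph_lrmorphism (f : A -> B) :
  is_alg_morph f -> exists g : {lrmorphism A -> B}, g =1 f.
Proof.
case=> f_lin f1 fM.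
by exists (HB.pack_for {lrmorphism A -> B} f
  (GRing.isLinear.Build F A B *:%R f f_lin)
  (GRing.isMonoidMorphism.Build A B f (f1, fM))).
Qed.

Lemma lrmorphism_alg_morph (f : {lrmorphism A -> B}) : is_alg_morph f.
Proof. by split; [exact: linearP | exact: rmorph1 | exact: rmorphM]. Qed.

Lemma alg_morph_comp (f : A -> B) (g : B -> C) :
  is_alg_morph f -> is_alg_morph g -> is_alg_morph (g \o f).
Proof.
by case=> fL f1 fM [gL g1 gM]; split=> [k x y|/=|x y] /=; rewrite ?fL ?f1 ?fM.
Qed.

Lemma alg_morph_peval (f : A -> B) r x :
  is_alg_morph f -> f (peval r x) = peval r (f x).
Proof.
move=> /alg_morph_lrmorphism [g gf]; rewrite -!gf.
rewrite -[peval r x]/(horner_alg x r) -[peval r (g x)]/(horner_alg (g x) r).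
elim/poly_ind: r => [|r c IH]; first by rewrite !rmorph0.
by rewrite !rmorphD !rmorphM /= !horner_algX !horner_algC IH rmorph_alg.
Qed.

End AlgMorphism.

Lemma peval_monic_quadratic (F : fieldType) (A : algType F) (p : {poly F}) (x : A) :
  p \is monic -> size p = 3 -> peval p x = x * x + p`_1 *: x + (p`_0)%:A.
Proof.
move=> /monicP p_lead size_p; rewrite -[peval p x]/(horner_alg x p).
have pE : p = 'X^2 + p`_1 *: 'X + (p`_0)%:P.
  apply/polyP=> i; rewrite !coefD coefXn coefZ coefX coefC.
  case: i => [|[|[|i]]] /=; rewrite ?mulr0 ?mulr1 ?add0r ?addr0 //.
    by move: p_lead; rewrite /lead_coef size_p.
  by rewrite nth_default ?size_p.
rewrite {1}pE !rmorphD /= linearZ /= rmorphXn /= horner_algX horner_algC.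
by rewrite expr2 mulr_algl.
Qed.

Lemma monic_quadratic_sqr (F : fieldType) (A : algType F) (p : {poly F}) (x : A) :
  p \is monic -> size p = 3 -> peval p x = 0 -> x * x = trp p *: x - (p`_0)%:A.
Proof.
move=> p_monic size_p; rewrite peval_monic_quadratic // -addrA => /eqP.
by rewrite addr_eq0 => /eqP ->; rewrite opprD /trp scaleNr.
Qed.

Lemma comm_quadratic (F : fieldType) (A : algType F) (x y : A) (s t : F) :
  x * x = s *: x - t%:A -> GRing.comm x (x * y + y * x - s *: y).
Proof.
move=> xx; rewrite /GRing.comm mulrBr mulrBl mulrDr mulrDl -scalerAr -scalerAl.
rewrite !mulrA xx -(mulrA y) xx mulrBl mulrBr -scalerAl -scalerAr mulr_algl mulr_algr.
by rewrite [LHS]addrAC [X in X + _ = _]addrAC subrr add0r addrA addrAC addrK addrC.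
Qed.

Section GeneratedSubalgebra.
Variables (F : fieldType) (A : algType F) (p q : {poly F}) (a b : A).
Hypothesis W_pq : is_W p q a b.
Variable P : A -> Prop.
Hypotheses (P1 : P 1) (P_lin : forall k x y, P x -> P y -> P (k *: x + y))
  (PM : forall x y, P x -> P y -> P (x * y)).

Let S : pred A := fun x => `[< P x >].

Fact S_subalg_closed : subalg_closed S.
Proof.
split=> [|k x y|x y]; first exact/asboolP.
  by move=> /asboolP Px /asboolP Py; apply/asboolP/P_lin.
by move=> /asboolP Px /asboolP Py; apply/asboolP/PM.
Qed.

HB.instance Definition _ :=
  GRing.isSubalgClosed.Build F A S (GRing.subalg_closed_semi S_subalg_closed).

Definition gen_subalg := {x : A | S x}.
HB.instance Definition _ := [isSub of gen_subalg for (@sval A S)].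
HB.instance Definition _ := [Equality of gen_subalg by <:].
HB.instance Definition _ := [Choice of gen_subalg by <:].
HB.instance Definition _ := [SubChoice_isSubAlgebra of gen_subalg by <:].

Lemma W_ind : P a -> P b -> forall x, P x.
Proof.
case: W_pq => pa qb lift uniq Pa Pb x.
have Sa : S a by apply/asboolP.
have Sb : S b by apply/asboolP.
have val_morph : is_alg_morph (val : gen_subalg -> A) by [].
have [||f [f_morph [fa fb]]] := lift gen_subalg (exist _ a Sa) (exist _ b Sb).
- by apply: val_inj; rewrite (alg_morph_peval _ _ val_morph).
- by apply: val_inj; rewrite (alg_morph_peval _ _ val_morph).
have valfK : forall y, val (f y) = y.
  apply: (uniq _ (val \o f) id) => /=; last 2 first.
  - exact: (congr1 val fa).
  - exact: (congr1 val fb).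
  - exact: alg_morph_comp.
  - by [].
by rewrite -(valfK x); apply/asboolP/(valP (f x)).
Qed.

End GeneratedSubalgebra.

Section MatrixModel.
Variable F : fieldType.

Definition polymx := 'M[{poly F}]_2.
HB.instance Definition _ := GRing.NzRing.on polymx.

Definition polymx_scale (k : F) (M : polymx) : polymx := k%:P *: (M : 'M_2).

Fact polymx_scaleA k l M : polymx_scale k (polymx_scale l M) = polymx_scale (k * l) M.
Proof. by rewrite /polymx_scale scalerA polyCM. Qed.
Fact polymx_scale1 : left_id 1 polymx_scale.
Proof. by move=> M; rewrite /polymx_scale scale1r. Qed.
Fact polymx_scaleDr : right_distributive polymx_scale +%R.
Proof. by move=> k M N; rewrite /polymx_scale scalerDr. Qed.
Fact polymx_scaleDl M : {morph polymx_scale^~ M : k l / k + l}.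
Proof. by move=> k l; rewrite /polymx_scale polyCD scalerDl. Qed.
HB.instance Definition _ := GRing.Zmodule_isLmodule.Build F polymx
  polymx_scaleA polymx_scale1 polymx_scaleDr polymx_scaleDl.

Fact polymx_scaleAl k (M N : polymx) : k *: (M * N) = (k *: M) * N.
Proof. by rewrite /= /polymx_scale -!mulmxE; apply: scalemxAl. Qed.
HB.instance Definition _ := GRing.Lmodule_isLalgebra.Build F polymx polymx_scaleAl.
Fact polymx_scaleAr k (M N : polymx) : k *: (M * N) = M * (k *: N).
Proof. by rewrite /= /polymx_scale -!mulmxE; apply: scalemxAr. Qed.
HB.instance Definition _ := GRing.Lalgebra_isAlgebra.Build F polymx polymx_scaleAr.

Definition mx2 (x00 x01 x10 x11 : {poly F}) : polymx :=
  \matrix_(i, j) if i == 0 :> nat then if j == 0 :> nat then x00 else x01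
                  else if j == 0 :> nat then x10 else x11.

Lemma mx2_mul x00 x01 x10 x11 y00 y01 y10 y11 :
  mx2 x00 x01 x10 x11 * mx2 y00 y01 y10 y11 =
  mx2 (x00 * y00 + x01 * y10) (x00 * y01 + x01 * y11)
      (x10 * y00 + x11 * y10) (x10 * y01 + x11 * y11).
Proof.
rewrite -mulmxE; apply/matrixP => i j; rewrite !mxE !big_ord_recl big_ord0 !mxE.
by case: i => -[|[|//]] ?; case: j => -[|[|//]] ? /=; rewrite addr0.
Qed.

Lemma mx2_add x00 x01 x10 x11 y00 y01 y10 y11 :
  mx2 x00 x01 x10 x11 + mx2 y00 y01 y10 y11 =
  mx2 (x00 + y00) (x01 + y01) (x10 + y10) (x11 + y11).
Proof.
by apply/matrixP => i j; rewrite !mxE; case: i => -[|[|//]] ?; case: j => -[|[|//]] ?.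
Qed.

Lemma mx2_opp x00 x01 x10 x11 :
  - mx2 x00 x01 x10 x11 = mx2 (- x00) (- x01) (- x10) (- x11).
Proof.
by apply/matrixP => i j; rewrite !mxE; case: i => -[|[|//]] ?; case: j => -[|[|//]] ?.
Qed.

Lemma mx2_scale k x00 x01 x10 x11 :
  k *: mx2 x00 x01 x10 x11 = mx2 (k%:P * x00) (k%:P * x01) (k%:P * x10) (k%:P * x11).
Proof.
by apply/matrixP => i j; rewrite !mxE; case: i => -[|[|//]] ?; case: j => -[|[|//]] ?.
Qed.

Lemma mx2_alg k : k%:A = mx2 k%:P 0 0 k%:P.
Proof.
apply/matrixP => i j; rewrite /= /polymx_scale !mxE.
by case: i => -[|[|//]] ?; case: j => -[|[|//]] ?; rewrite /= ?mulr1 ?mulr0.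
Qed.

Lemma polymx_horner_scalar (s r : {poly F}) :
  horner_alg (mx2 s 0 0 s) r = mx2 (r \Po s) 0 0 (r \Po s).
Proof.
elim/poly_ind: r => [|r c IH].
  rewrite rmorph0 comp_poly0.
  by apply/matrixP => i j; rewrite !mxE; case: i => -[|[|//]] ?; case: j => -[|[|//]] ?.
rewrite rmorphD rmorphM /= horner_algX horner_algC IH mx2_alg mx2_mul mx2_add.
by rewrite comp_polyD comp_polyM comp_polyX comp_polyC; congr mx2; ring.
Qed.

Lemma mx2_0 : 0 = mx2 0 0 0 0.
Proof.
by apply/matrixP => i j; rewrite !mxE; case: i => -[|[|//]] ?; case: j => -[|[|//]] ?.
Qed.

(* [a] is the companion matrix of [p] and [b] has trace [trp q] and determinant
   [q`_0]; the twist by ['X] makes [omega] the scalar matrix of a polynomial of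
   degree 2, hence transcendental over [F]. *)
Lemma transcendental_model (p q : {poly F}) :
  p \is monic -> size p = 3 -> q \is monic -> size q = 3 ->
  exists (B : algType F) (a b : B), [/\ peval p a = 0, peval q b = 0 &
    forall r, horner_alg (a * ((trp q)%:A - b) + b * ((trp p)%:A - a)) r = 0 -> r = 0].
Proof.
move=> p_monic size_p q_monic size_q.
pose a := mx2 0 (- (p`_0)%:P) 1 (trp p)%:P.
pose b := mx2 'X ('X * ((trp q)%:P - 'X) - (q`_0)%:P) 1 ((trp q)%:P - 'X).
pose s := 'X^2 + ((trp p - trp q) *: 'X + (p`_0 + q`_0)%:P).
have size_s : size s = 3.
  rewrite size_polyDl size_polyXn // (leq_ltn_trans (size_polyD _ _)) // gtn_max.
  rewrite (leq_ltn_trans (size_scale_leq _ _)) ?size_polyX //.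
  exact: leq_ltn_trans (size_polyC_leq1 _) _.
have omega_s : a * ((trp q)%:A - b) + b * ((trp p)%:A - a) = mx2 s 0 0 s.
  rewrite /a /b /s !mx2_alg !mx2_opp !mx2_add !mx2_mul !mx2_add -mul_polyC polyCB polyCD.
  by congr mx2; ring.
exists polymx, a, b; split.
- rewrite peval_monic_quadratic // /a mx2_mul mx2_scale mx2_alg !mx2_add mx2_0 /trp.
  by congr mx2; rewrite ?polyCN; ring.
- rewrite peval_monic_quadratic // /b mx2_mul mx2_scale mx2_alg !mx2_add mx2_0 /trp.
  by congr mx2; rewrite ?polyCN; ring.
move=> r; rewrite omega_s polymx_horner_scalar => /matrixP/(_ 0 0).
by rewrite !mxE /= => /eqP; rewrite comp_poly_eq0 ?size_s // => /eqP.
Qed.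

End MatrixModel.

Section AlgebraW.
Variables (F : fieldType) (p q : {poly F}).
Hypotheses (p_monic : p \is monic) (size_p : size p = 3)
  (q_monic : q \is monic) (size_q : size q = 3).
Variables (A : algType F) (a b : A).
Hypothesis W_pq : is_W p q a b.
Variable star : A -> A.
Hypothesis star_adj : is_adjunction p q a b star.

Local Notation tp := (trp p).
Local Notation tq := (trp q).
Local Notation np := p`_0.
Local Notation nq := q`_0.

Lemma mul_aa : a * a = tp *: a - np%:A.
Proof. by case: W_pq => pa _ _ _; apply: monic_quadratic_sqr. Qed.

Lemma mul_bb : b * b = tq *: b - nq%:A.
Proof. by case: W_pq => _ qb _ _; apply: monic_quadratic_sqr. Qed.

Fact star_is_linear : linear star. Proof. by case: star_adj. Qed.
HB.instance Definition _ := GRing.isLinear.Build F A A *:%R star star_is_linear.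

Lemma starM x y : star (x * y) = star y * star x. Proof. by case: star_adj. Qed.
Lemma star1 : star 1 = 1. Proof. by case: star_adj. Qed.
Lemma star_a : star a = tp%:A - a. Proof. by case: star_adj. Qed.
Lemma star_b : star b = tq%:A - b. Proof. by case: star_adj. Qed.
Lemma star_alg k : star k%:A = k%:A. Proof. by rewrite linearZ /= star1. Qed.

Lemma starK : involutive star.
Proof.
have [_ _ _ uniq] := W_pq.
apply: (uniq _ (star \o star) id) => /=.
- by split=> [k x y|/=|x y] /=; rewrite ?linearP ?star1 ?starM.
- by [].
- by rewrite star_a linearB /= star_alg star_a opprB addrC subrK.
- by rewrite star_b linearB /= star_alg star_b opprB addrC subrK.
Qed.

Definition omega := a * star b + b * star a.

Lemma omegaE : omega = tq *: a + tp *: b - (a * b + b * a).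
Proof. by rewrite /omega star_a star_b !mulrBr !mulr_algr addrACA opprD. Qed.

Lemma anticomm_ab : a * b + b * a = tq *: a + tp *: b - omega.
Proof. by rewrite omegaE subKr. Qed.

Lemma comm_omega_a : GRing.comm a omega.
Proof.
have -> : omega = tq *: a - (a * b + b * a - tp *: b).
  by rewrite anticomm_ab addrAC addrK subKr.
apply: commrB; last exact: (comm_quadratic _ mul_aa).
by rewrite /GRing.comm -scalerAl -scalerAr.
Qed.

Lemma comm_omega_b : GRing.comm b omega.
Proof.
have -> : omega = tp *: b - (b * a + a * b - tq *: a).
  by rewrite [b * a + _]addrC anticomm_ab (addrC (tq *: a)) addrAC addrK subKr.
apply: commrB; last exact: (comm_quadratic _ mul_bb).
by rewrite /GRing.comm -scalerAl -scalerAr.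
Qed.

Lemma omega_central x : GRing.comm omega x.
Proof.
elim/(W_ind W_pq): x.
- exact: commr1.
- move=> k y z oy oz; apply: commrD => //.
  by rewrite /GRing.comm -scalerAl -scalerAr oy.
- exact: commrM.
- exact/commr_sym/comm_omega_a.
- exact/commr_sym/comm_omega_b.
Qed.

Local Notation ev := (horner_alg omega).

Lemma ev_central r x : GRing.comm (ev r) x.
Proof.
elim/poly_ind: r => [|r c IH]; first by rewrite rmorph0; exact/commr_sym/commr0.
rewrite rmorphD rmorphM /= horner_algX horner_algC; apply/commr_sym/commrD.
  exact/commrM/commr_sym/omega_central/commr_sym.
exact/commr_sym/comm_alg.
Qed.

Lemma star_omega : star omega = omega.
Proof. by rewrite /omega linearD /= !starM !starK addrC. Qed.

Lemma star_ev r : star (ev r) = ev r.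
Proof.
elim/poly_ind: r => [|r c IH]; first by rewrite rmorph0 raddf0.
rewrite !rmorphD !rmorphM /= horner_algX horner_algC linearD /= starM star_alg.
by rewrite star_omega IH ev_central.
Qed.

Definition wbasis : seq A := [:: 1; a; b; a * b].

Definition in_span (x : A) :=
  exists r : 'I_4 -> {poly F}, x = \sum_(i < 4) ev (r i) * wbasis`_i.

Lemma span0 : in_span 0.
Proof. by exists (fun=> 0); rewrite big1 // => i _; rewrite rmorph0 mul0r. Qed.

Lemma spanD x y : in_span x -> in_span y -> in_span (x + y).
Proof.
move=> [r ->] [s ->]; exists (fun i => r i + s i); rewrite -big_split /=.
by apply: eq_bigr => i _; rewrite rmorphD mulrDl.
Qed.

Lemma span_sum n (f : 'I_n -> A) : (forall i, in_span (f i)) -> in_span (\sum_i f i).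
Proof. by move=> span_f; apply: (big_ind in_span span0 spanD). Qed.

Lemma span_evM r x : in_span x -> in_span (ev r * x).
Proof.
move=> [s ->]; exists (fun i => r * s i); rewrite mulr_sumr.
by apply: eq_bigr => i _; rewrite rmorphM mulrA.
Qed.

Lemma spanZ k x : in_span x -> in_span (k *: x).
Proof. by rewrite -mulr_algl -(horner_algC omega); apply: span_evM. Qed.

Lemma spanB x y : in_span x -> in_span y -> in_span (x - y).
Proof. by move=> sx sy; rewrite -scaleN1r; apply/spanD/spanZ. Qed.

Lemma span_basis i : (i < 4)%N -> in_span wbasis`_i.
Proof.
move=> lt_i4; exists (fun j : 'I_4 => (j == i :> nat)%:R).
rewrite (bigD1 (Ordinal lt_i4)) //= eqxx rmorph1 mul1r big1 ?addr0 // => j.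
by rewrite -val_eqE /= => /negbTE ->; rewrite rmorph0 mul0r.
Qed.

Lemma span1 : in_span 1. Proof. exact: (span_basis (i := 0)). Qed.
Lemma span_a : in_span a. Proof. exact: (span_basis (i := 1)). Qed.
Lemma span_b : in_span b. Proof. exact: (span_basis (i := 2)). Qed.
Lemma span_ab : in_span (a * b). Proof. exact: (span_basis (i := 3)). Qed.

Lemma span_ev r : in_span (ev r).
Proof. by rewrite -[ev r]mulr1; apply/span_evM/span1. Qed.

Lemma span_mulr x y :
  in_span x -> (forall i, (i < 4)%N -> in_span (wbasis`_i * y)) -> in_span (x * y).
Proof.
move=> [r ->] span_y; rewrite mulr_suml; apply: span_sum => i.
by rewrite -mulrA; apply/span_evM/span_y.
Qed.

Lemma span_mull x y :
  in_span x -> (forall i, (i < 4)%N -> in_span (y * wbasis`_i)) -> in_span (y * x).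
Proof.
move=> [r ->] span_y; rewrite mulr_sumr; apply: span_sum => i.
by rewrite mulrA -ev_central -mulrA; apply/span_evM/span_y.
Qed.

Lemma span_aa : in_span (a * a).
Proof. by rewrite mul_aa; apply: spanB; apply: spanZ; [exact: span_a | exact: span1]. Qed.

Lemma span_bb : in_span (b * b).
Proof. by rewrite mul_bb; apply: spanB; apply: spanZ; [exact: span_b | exact: span1]. Qed.

Lemma span_ba : in_span (b * a).
Proof.
rewrite -[b * a](addKr (a * b)) anticomm_ab addrC; apply: spanB; last exact: span_ab.
apply: spanB; last by rewrite -(horner_algX omega); exact: span_ev.
by apply: spanD; apply: spanZ; [exact: span_a | exact: span_b].
Qed.

Lemma span_mulr_b x : in_span x -> in_span (x * b).
Proof.
move/span_mulr; apply=> -[|[|[|[|//]]]] _ /=; rewrite ?mul1r.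
- exact: span_b.
- exact: span_ab.
- exact: span_bb.
rewrite -mulrA mul_bb mulrBr -scalerAr mulr_algr.
by apply: spanB; apply: spanZ; [exact: span_ab | exact: span_a].
Qed.

Lemma span_all x : in_span x.
Proof.
(* The x with x * span <= span form a subalgebra containing a and b. *)
suff /(_ 1 span1) : forall y, in_span y -> in_span (x * y) by rewrite mulr1.
elim/(W_ind W_pq): x.
- by move=> y; rewrite mul1r.
- move=> k u v su sv y sy; rewrite mulrDl -scalerAl.
  by apply: spanD; [apply/spanZ/su | apply: sv].
- by move=> u v su sv y sy; rewrite -mulrA; apply/su/sv.
- move=> y /span_mull; apply=> -[|[|[|[|//]]]] _ /=; rewrite ?mulr1.
  + exact: span_a.
  + exact: span_aa.
  + exact: span_ab.
  + by rewrite mulrA; apply/span_mulr_b/span_aa.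
- move=> y /span_mull; apply=> -[|[|[|[|//]]]] _ /=; rewrite ?mulr1.
  + exact: span_b.
  + exact: span_ba.
  + exact: span_bb.
  + by rewrite mulrA; apply/span_mulr_b/span_ba.
Qed.

Definition in_Fomega (x : A) := exists r, x = ev r.

Lemma Fomega0 : in_Fomega 0.
Proof. by exists 0; rewrite rmorph0. Qed.

Lemma FomegaD x y : in_Fomega x -> in_Fomega y -> in_Fomega (x + y).
Proof. by move=> [r ->] [s ->]; exists (r + s); rewrite rmorphD. Qed.

Lemma Fomega_evM r x : in_Fomega x -> in_Fomega (ev r * x).
Proof. by move=> [s ->]; exists (r * s); rewrite rmorphM. Qed.

Lemma FomegaZ k x : in_Fomega x -> in_Fomega (k *: x).
Proof. by rewrite -mulr_algl -(horner_algC omega); apply: Fomega_evM. Qed.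

Lemma trace_in_Fomega x : in_Fomega (x + star x).
Proof.
have [r ->] := span_all x; rewrite linear_sum -big_split /=.
apply: (big_ind in_Fomega Fomega0 FomegaD) => i _.
rewrite starM star_ev -ev_central -mulrDr; apply: Fomega_evM.
case: i => -[|[|[|[|//]]]] _ /=.
- by exists (1 + 1); rewrite star1 rmorphD rmorph1.
- by exists tp%:P; rewrite star_a subrKC horner_algC.
- by exists tq%:P; rewrite star_b subrKC horner_algC.
exists ((tq * tp)%:P - 'X); rewrite rmorphB /= horner_algC horner_algX.
rewrite starM; have -> : a * b = tq *: a - a * star b.
  by rewrite star_b mulrBr mulr_algr subKr.
rewrite [in star b * _]star_b mulrBl mulr_algl [in tq *: star a]star_a.
rewrite scalerBr scalerA opprD addrA [RHS]addrA; congr (_ - _).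
by rewrite addrC subrKA.
Qed.

Lemma norm_mul x y :
  in_Fomega (y * star y) -> x * y * star (x * y) = y * star y * (x * star x).
Proof. by move=> [r Ny]; rewrite starM mulrA -(mulrA x) Ny -ev_central -mulrA. Qed.

(* N (k x + y) = k^2 N x + k (x y^* + (x y^* )^* ) + N y needs no division by 2. *)
Lemma norm_in_Fomega x : in_Fomega (x * star x).
Proof.
elim/(W_ind W_pq): x.
- by exists 1; rewrite star1 mulr1 rmorph1.
- move=> k u v Nu Nv; rewrite linearP /= mulrDl !mulrDr -!scalerAl -!scalerAr scalerA.
  rewrite addrA -(addrA ((k * k) *: _)) -scalerDr; apply: FomegaD => //.
  apply: FomegaD; apply: FomegaZ => //.
  by rewrite -[X in X * star u]starK -starM; apply: trace_in_Fomega.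
- by move=> u v Nu Nv; rewrite norm_mul //; case: Nv => s ->; apply: Fomega_evM.
- by exists np%:P; rewrite star_a mulrBr mulr_algr mul_aa subKr horner_algC.
- by exists nq%:P; rewrite star_b mulrBr mulr_algr mul_bb subKr horner_algC.
Qed.

Lemma norm_comm x : x * star x = star x * x.
Proof.
have [r tr_x] := trace_in_Fomega x.
have -> : star x = ev r - x by rewrite -tr_x (addrC x) addrK.
by rewrite mulrBr mulrBl ev_central.
Qed.

Lemma omega_transcendental r : ev r = 0 -> r = 0.
Proof.
have [B [a' [b' [pa' qb' transc]]]] := transcendental_model p_monic size_p q_monic size_q.
have [_ _ lift _] := W_pq; have [f [f_morph [fa fb]]] := lift B a' b' pa' qb'.
have [g gf] := alg_morph_lrmorphism f_morph.
have g_omega : g omega = a' * (tq%:A - b') + b' * (tp%:A - a').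
  by rewrite /omega star_a star_b rmorphD !rmorphM !rmorphB /= !rmorph_alg !gf fa fb.
move=> ev_r0; apply: transc; rewrite -g_omega.
change (peval r (g omega) = 0); rewrite -(alg_morph_peval _ _ (lrmorphism_alg_morph g)).
by change (g (ev r) = 0); rewrite ev_r0 rmorph0.
Qed.

End AlgebraW.

Theorem mainTheorem17 (F : fieldType) (p q : {poly F})
  (hp : p \is monic) (hp2 : size p = 3%N) (hq : q \is monic) (hq2 : size q = 3%N)
  (A : algType F) (a b : A) (hW : is_W p q a b)
  (star : A -> A) (hstar : is_adjunction p q a b star) (x : A) :
  (exists y : A, x * y = 1 /\ y * x = 1) <->
  (exists c : F, c != 0 /\ x * star x = c%:A).
Proof.
split=> [[y [xy _]] | [c [c_neq0 Nx]]].
- have [n Nx] := norm_in_Fomega hp hp2 hq hq2 hW hstar x.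
  have [m Ny] := norm_in_Fomega hp hp2 hq hq2 hW hstar y.
  have mn1 : m * n = 1.
    apply/eqP; rewrite -subr_eq0; apply/eqP/(omega_transcendental hp hp2 hq hq2 hW hstar).
    rewrite rmorphB rmorphM rmorph1 /= -Nx -Ny -(norm_mul hp hp2 hq hq2 hW hstar); last by exists m.
    by rewrite xy (star1 hstar) mulr1 subrr.
  have : n \is a GRing.unit by apply/unitrP; exists m; rewrite [n * m]mulrC mn1.
  rewrite poly_unitE => /andP[/size_poly1P[c c_neq0 n_c] _].
  by exists c; rewrite Nx n_c horner_algC.
- exists (c^-1 *: star x); split.
    by rewrite -scalerAr Nx scalerA mulVf // scale1r.
  by rewrite -scalerAl -(norm_comm hp hp2 hq hq2 hW hstar) Nx scalerA mulVf // scale1r.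
Qed.
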